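(* Let $\mathcal X$ be a Polish space with Borel probability measure $\rho$, $a<b$ reals, $T\ge1$, and $\mathcal C\subseteq[a,b]^T$ nonempty compact. Let $\ell:[a,b]\times[a,b]\to\mathbb R$ be SELF with $\ell(y,y')=\langle\psi(y),V\psi(y')\rangle_{\mathcal H}$ and continuous. Let $g_1,\dots,g_T:\mathcal X\to\mathcal H$ be measurable with $\|g_t(x)\|_{\mathcal H}$ bounded almost everywhere, and set $$r(x,c)=\frac1T\sum_{t=1}^T\langle\psi(c_t),Vg_t(x)\rangle_{\mathcal H},\qquad\bar{\mathcal E}(f)=\int_{\mathcal X}r(x,f(x))\,d\rho(x).$$ Then there exist a measurable $f^\circ:\mathcal X\to\mathcal C$ with $f^\circ(x)\in\operatorname*{argmin}_{c\in\mathcal C}r(x,c)$ and a measurable function $m$ with $m(x)=\min_{c\in\mathcal C}r(x,c)$ almost everywhere, such that $$\bar{\mathcal E}(f^\circ)=\int_{\mathcal X}m(x)\,d\rho(x)=\inf_{f:\mathcal X\to\mathcal C}\bar{\mathcal E}(f),$$ the infimum being over measurable $f$.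
   Context: Definition (SELF): Let $\mathcal{Y}$ be a compact set. A function $\ell:\mathcal{Y}\times\mathcal{Y}\to\mathbb{R}$ is a Structure Encoding Loss Function (SELF) if there exist a continuous feature map $\psi:\mathcal{Y}\to\mathcal{H}$, with $\mathcal{H}$ a reproducing kernel Hilbert space on $\mathcal{Y}$, and a continuous linear operator $V:\mathcal{H}\to\mathcal{H}$ such that $\ell(y,y')=\langle\psi(y),V\psi(y')\rangle_{\mathcal H}$ for all $y,y'\in\mathcal{Y}$. For $c\in\mathbb R^T$, $c_t$ is its $t$-th coordinate. *)

From HB Require Import structures.
From mathcomp Require Import all_boot all_order all_algebra.
From mathcomp Require Import all_classical all_reals all_analysis.
Set Implicit Arguments. Unset Strict Implicit. Unset Printing Implicit Defensive.
Import Order.TTheory GRing.Theory Num.Theory.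
Import numFieldNormedType.Exports.
Local Open Scope classical_set_scope.
Local Open Scope ring_scope.

Section Defs.
Context {R : realType}.

Definition metric_for (X : topologicalType) (d : X -> X -> R) : Prop :=
  [/\ (forall x y, 0 <= d x y),
      (forall x y, d x y = 0 <-> x = y),
      (forall x y, d x y = d y x),
      (forall x y z, d x z <= d x y + d y z) &
      (forall A : set X, open A <->
         (forall x, A x -> exists2 e : R, 0 < e & forall y, d x y < e -> A y))].

Definition complete_metric (X : topologicalType) (d : X -> X -> R) : Prop :=
  forall u : nat -> X,
    (forall e : R, 0 < e -> exists N : nat, forall m n : nat,
        (N <= m)%N -> (N <= n)%N -> d (u m) (u n) < e) ->
    exists l : X, u @ \oo --> l.

Definition separable_space (X : topologicalType) : Prop :=
  exists D : set X, countable D /\ closure D = setT.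

Definition polish (X : topologicalType) : Prop :=
  separable_space X /\
  exists d : X -> X -> R, metric_for d /\ complete_metric d.

(* ip is an inner product on H inducing the norm of H (so that a complete
   normed space H with such an ip is a real Hilbert space) *)
Definition inner_product_of (H : normedModType R) (ip : H -> H -> R) : Prop :=
  [/\ (forall x y, ip x y = ip y x),
      (forall (a : R) x y z, ip (a *: x + y) z = a * ip x z + ip y z) &
      (forall x, ip x x = `|x| ^+ 2)].

(* H (with inner product ip) is a reproducing kernel Hilbert space on Y:
   via the injective linear map ev, elements of H are functions on Y,
   and point evaluations are continuous (bounded) linear functionals. *)
Definition rkhs_on (Y : set R) (H : completeNormedModType R)
  (ip : H -> H -> R) (ev : H -> R -> R) : Prop :=
  [/\ inner_product_of ip,
      (forall (a : R) h k y, ev (a *: h + k) y = a * ev h y + ev k y),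
      (forall h, (forall y, Y y -> ev h y = 0) -> h = 0) &
      (forall y, Y y -> exists M : R, forall h, `|ev h y| <= M * `|h|)].

Definition SELF (Y : set R) (l : R -> R -> R) (H : completeNormedModType R)
  (ip : H -> H -> R) (ev : H -> R -> R) (psi : R -> H) (V : {linear H -> H})
  : Prop :=
  [/\ rkhs_on Y ip ev, {within Y, continuous psi}, continuous V &
      (forall y y', Y y -> Y y' -> l y y' = ip (psi y) (V (psi y')))].

Definition borel_measurable d (T : measurableType d) (Y : topologicalType)
  (f : T -> Y) : Prop :=
  forall O : set Y, open O -> measurable (f @^-1` O).

Definition rfun (T : nat) (H : completeNormedModType R) (ip : H -> H -> R)
  (psi : R -> H) (V : {linear H -> H}) (X : Type) (g : 'I_T -> X -> H)
  (x : X) (c : 'rV[R]_T) : R :=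
  T%:R^-1 * \sum_(t < T) ip (psi (c ord0 t)) (V (g t x)).

Definition Ebar d (X : measurableType d) (rho : {measure set X -> \bar R})
  (T : nat) (H : completeNormedModType R) (ip : H -> H -> R)
  (psi : R -> H) (V : {linear H -> H}) (g : 'I_T -> X -> H)
  (f : X -> 'rV[R]_T) : \bar R :=
  (\int[rho]_x (rfun ip psi V g x (f x))%:E)%E.

End Defs.

Notation borel_type X := (g_sigma_algebraType (@open X)).

From HB Require Import structures.
From mathcomp Require Import all_boot all_order all_algebra.
From mathcomp Require Import all_classical all_reals all_analysis.
From mathcomp Require Import ring lra measurable_realfun.
Set Implicit Arguments. Unset Strict Implicit. Unset Printing Implicit Defensive.
Import Order.TTheory GRing.Theory Num.Theory.
Import numFieldNormedType.Exports.
Local Open Scope classical_set_scope.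
Local Open Scope ring_scope.

(* The integrand r is a Caratheodory function of (x, c): continuous in c (the
   inner product is continuous by polarization, and psi extends continuously
   off [a, b] by clamping) and measurable in x.  For such a G and compact
   C ⊆ R^T, the set of x for which some c ∈ C has G x c <= 0 is measurable,
   since it suffices to test G x < 1/(j+1) on a countable dense subset of C.
   Hence minima of Caratheodory functions under Caratheodory constraints are
   measurable in x.  Minimizing r, then each coordinate c_0, ..., c_(T-1) in
   turn over the remaining minimizers, singles out a measurable argmin f°.
   As r(x, f x) >= min r(x, .) pointwise, Ebar(f°) = ∫ min r = inf Ebar. *)

(* Unlike [le_integral], no measurability is required: both halves of the
   integral are suprema over simple functions below [f^+] and [f^-]. *)
Lemma le_integral_pointwise d (T : measurableType d) (R : realType)
  (mu : {measure set T -> \bar R}) (f g : T -> \bar R) :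
  (forall x, (f x <= g x)%E) -> (\int[mu]_x f x <= \int[mu]_x g x)%E.
Proof.
move=> fg; rewrite /integral !patch_setT; apply: leeB.
  apply: ereal_sup_le => _ [h /= hf <-]; exists h => //= x.
  apply: (le_trans (hf x)); rewrite !funeposE; apply: le_max2 => //; exact: fg.
apply: ereal_sup_le => _ [h /= hf <-]; exists h => //= x.
apply: (le_trans (hf x)); rewrite !funenegE; apply: le_max2 => //.
by rewrite leeN2; exact: fg.
Qed.

Section InnerProduct.
Context {R : realType} {H : normedModType R} (ip : H -> H -> R).
Hypothesis ipH : inner_product_of ip.

Lemma ip_polarization u h : ip u h = (`|u + h| ^+ 2 - `|u| ^+ 2 - `|h| ^+ 2) / 2.
Proof.
case: ipH => ipC ip_linear ip_norm.
have ipDl x y z : ip (x + y) z = ip x z + ip y z.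
  by have := ip_linear 1 x y z; rewrite scale1r mul1r.
rewrite -!ip_norm ipDl (ipC u (u + h)) (ipC h (u + h)) !ipDl (ipC h u).
by field.
Qed.

Lemma continuous_ipr u : continuous (ip u).
Proof.
have -> : ip u = (fun h => (`|u + h| ^+ 2 - `|u| ^+ 2 - `|h| ^+ 2) / 2).
  by apply: funext => h; rewrite ip_polarization.
move=> h; apply: cvgM; last exact: cvg_cst.
apply: cvgB; last by rewrite expr2; apply: cvgM; exact: cvg_norm.
apply: cvgB; last exact: cvg_cst.
by rewrite expr2; apply: cvgM; apply: cvg_norm; apply: cvgD => //; exact: cvg_cst.
Qed.

Lemma continuous_ipl u : continuous (ip ^~ u).
Proof.
have -> : ip ^~ u = ip u by apply: funext => h; case: ipH => ipC _ _; rewrite ipC.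
exact: continuous_ipr.
Qed.

End InnerProduct.

Section Clamp.
Context {R : realType}.

Definition clamp (a b y : R) := Num.max a (Num.min y b).

Lemma clamp_itv a b y : a <= b -> clamp a b y \in `[a, b].
Proof.
move=> ab; rewrite /clamp in_itv /= le_max lexx /= ge_max ab /=.
by rewrite ge_min lexx orbT.
Qed.

Lemma clamp_id a b y : y \in `[a, b] -> clamp a b y = y.
Proof.
by rewrite in_itv /= => /andP[ay yb]; rewrite /clamp (min_l yb) (max_r ay).
Qed.

Lemma continuous_clamp a b : continuous (clamp a b).
Proof.
move=> y; apply: (@continuous_max R R (fun=> a) (fun y => Num.min y b)).
  exact: cvg_cst.
by apply: (@continuous_min R R id (fun=> b)); [exact: cvg_id | exact: cvg_cst].
Qed.

End Clamp.

Lemma continuous_comp_within {R : realType} {U : topologicalType} (A : set R)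
  (f : R -> U) (h : R -> R) :
  {within A, continuous f} -> continuous h -> (forall z, A (h z)) ->
  continuous (f \o h).
Proof.
move=> cf ch hA y.
move/subspace_continuousP: cf => /(_ (h y) (hA y)) cfw.
apply: (@cvg_comp _ _ _ h f _ (within A (nbhs (h y)))) => // P /= nP.
have hP : nbhs y (h @^-1` [set t | A t -> P t]) := ch y _ nP.
by apply: filterS hP => z /= /(_ (hA z)).
Qed.

Lemma continuous_sum (U : topologicalType) {R : realType} n (f : 'I_n -> U -> R) :
  (forall i, continuous (f i)) -> continuous (fun x => \sum_(i < n) f i x).
Proof.
elim: n f => [|n IH] f cf.
  by under eq_fun do rewrite big_ord0; exact: cst_continuous.
under eq_fun do rewrite big_ord_recr /=.
move=> x; apply: continuousD; last exact: cf.
exact: (IH (fun i => f (widen_ord (leqnSn n) i))).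
Qed.

Section RealMeasurability.
Context d (X : measurableType d) {R : realType}.
Implicit Types f : X -> R.

Lemma measurable_set_ltr f r :
  measurable_fun setT f -> measurable [set x | f x < r].
Proof.
move=> mf; rewrite -preimage_itvNyo -[X in measurable X]setTI.
exact: mf measurableT _ (measurable_itv _).
Qed.

Lemma measurable_fun_ler_sets f :
  (forall r, measurable [set x | f x <= r]) -> measurable_fun setT f.
Proof.
move=> mf; apply: (measurability _ (RGenInftyO.measurableE R)) => _ [_ [r ->] <-].
rewrite setTI (_ : _ @^-1` _ = \bigcup_k [set x | f x <= r - k.+1%:R^-1]).
  by apply: bigcupT_measurable => k; exact: mf.
apply/seteqP; split => x /=; rewrite in_itv /=.
  move=> fr; have [k hk] := ltr_add_invr fr; exists k => //=.
  by move: hk; generalize (k.+1%:R^-1 : R) => t; lra.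
move=> [k _ /= hk]; have : 0 < k.+1%:R^-1 :> R by rewrite invr_gt0.
by move: hk; generalize (k.+1%:R^-1 : R) => t; lra.
Qed.

Lemma measurable_fun_continuous_comp (U : topologicalType) (g : X -> U)
  (phi : U -> R) :
  borel_measurable g -> continuous phi -> measurable_fun setT (phi \o g).
Proof.
move=> mg cphi; apply: (measurability _ (RGenOpens.measurableE R)).
move=> _ [_ [a [b ->]] <-]; rewrite setTI comp_preimage.
by apply: mg; move/continuousP: cphi; apply; exact: interval_open.
Qed.

End RealMeasurability.

Section RationalBalls.
Context {R : realType} {m n : nat}.

Definition rat_ball (p : 'M[rat]_(m, n) * nat) : set 'M[R]_(m, n) :=
  ball (map_mx ratr p.1 : 'M[R]_(m, n)) p.2.+1%:R^-1.

Lemma ratr_mx_dense (c : 'M[R]_(m, n)) e : 0 < e ->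
  exists q : 'M[rat]_(m, n), ball c e (map_mx ratr q : 'M[R]_(m, n)).
Proof.
move=> e0.
have near_rat i j : {q : rat | ratr q \in `](c i j - e), (c i j + e)[}.
  by apply: cid; apply: rat_in_itvoo; lra.
exists (\matrix_(i, j) sval (near_rat i j)); split => // i j.
rewrite !mxE; case: (near_rat i j) => q /=; rewrite in_itv /= => /andP[q1 q2].
by rewrite /ball /= ltr_norml; apply/andP; split; lra.
Qed.

Lemma rat_ball_fine (c : 'M[R]_(m, n)) e : 0 < e ->
  exists p, rat_ball p c /\ rat_ball p `<=` ball c e.
Proof.
move=> e0; have e20 : 0 < e / 2 by lra.
have [k ke] := ltr_add_invr e20; rewrite add0r in ke.
have k0 : 0 < k.+1%:R^-1 :> R by rewrite invr_gt0.
have [q cq] := ratr_mx_dense c k0.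
exists (q, k); split => [|d qd]; first exact: ball_sym.
apply: (@le_ball _ _ _ (k.+1%:R^-1 + k.+1%:R^-1)).
  by rewrite [leRHS](splitr e) lerD // ltW.
exact: ball_triangle cq qd.
Qed.

Lemma open_bigcup_rat_ball (O : set 'M[R]_(m, n)) : open O ->
  O = \bigcup_(p in [set p | rat_ball p `<=` O]) rat_ball p.
Proof.
move=> oO; apply/seteqP; split => [c Oc|c [p /= pO /pO] //].
have /(nbhs_ballP _ _) [e e0 eO] := open_nbhs_nbhs (conj oO Oc).
have [p [pc pe]] := rat_ball_fine c e0.
by exists p => //= d /pe /eO.
Qed.

Lemma dense_rat_family (C : set 'M[R]_(m, n)) : C !=set0 ->
  exists D : 'M[rat]_(m, n) * nat -> 'M[R]_(m, n), (forall p, C (D p)) /\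
    forall c, C c -> forall e, 0 < e -> exists p, ball c e (D p).
Proof.
move=> [c0 Cc0].
pose D p :=
  if pselect (C `&` rat_ball p !=set0) is left h then sval (cid h) else c0.
exists D; split => [p|c Cc e e0].
  by rewrite /D; case: pselect => // h; case: (cid h) => ? [].
have [p [pc pe]] := rat_ball_fine c e0.
exists p; apply: pe; rewrite /D; case: pselect => [h|[]]; last by exists c.
by case: (cid h) => ? [].
Qed.

End RationalBalls.

Lemma measurable_preimage_rat_ball d (X : measurableType d) {R : realType} m n
  (f : X -> 'M[R]_(m, n)) p :
  (forall i j, measurable_fun setT (fun x => f x i j)) ->
  measurable (f @^-1` rat_ball p).
Proof.
move=> mf.
have -> : f @^-1` rat_ball p = \bigcap_(ij in [set: 'I_m * 'I_n])
    [set x | `|(map_mx (@ratr R) p.1) ij.1 ij.2 - f x ij.1 ij.2| < p.2.+1%:R^-1].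
  apply/seteqP; split => [x [_ px] [i j] _|x px] /=; first exact: px.
  by split=> [|i j]; [rewrite invr_gt0 | exact: (px (i, j))].
apply: fin_bigcap_measurable => [|[i j] _]; first exact: finite_finset.
apply: measurable_set_ltr; apply: measurableT_comp => //.
by apply: measurable_funB => //; exact: mf.
Qed.

Lemma borel_measurable_mx d (X : measurableType d) {R : realType} m n
  (f : X -> 'M[R]_(m, n)) :
  (forall i j, measurable_fun setT (fun x => f x i j)) -> borel_measurable f.
Proof.
move=> mf O /open_bigcup_rat_ball ->; rewrite preimage_bigcup bigcup_mkcond.
apply: countable_bigcupT_measurable => [|p]; first exact: countableP.
by case: ifP => // _; exact: measurable_preimage_rat_ball.
Qed.

Definition caratheodory d (X : measurableType d) (U : topologicalType)
  (R : realType) (F : X -> U -> R) :=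
  (forall x, continuous (F x)) /\ (forall u, measurable_fun setT (F ^~ u)).

Section Caratheodory.
Context d (X : measurableType d) (U : topologicalType) (R : realType).
Implicit Types F G : X -> U -> R.

Lemma caratheodory_continuous (phi : U -> R) :
  continuous phi -> caratheodory (fun (_ : X) => phi).
Proof. by move=> cphi; split => // u; exact: measurable_cst. Qed.

Lemma caratheodory_measurable (m : X -> R) :
  measurable_fun setT m -> caratheodory (fun x (_ : U) => m x).
Proof. by move=> mm; split => // x; exact: cst_continuous. Qed.

Lemma caratheodoryB F G : caratheodory F -> caratheodory G ->
  caratheodory (fun x u => F x u - G x u).
Proof.
move=> [cF mF] [cG mG]; split => [x u|u]; last exact: measurable_funB.
by apply: continuousB; [exact: cF | exact: cG].
Qed.

Lemma caratheodory_max F G : caratheodory F -> caratheodory G ->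
  caratheodory (fun x u => Num.max (F x u) (G x u)).
Proof.
move=> [cF mF] [cG mG]; split => [x u|u]; last exact: measurable_maxr.
exact: continuous_max (cF x u) (cG x u).
Qed.

End Caratheodory.

Section MeasurableSelection.
Context d (X : measurableType d) (R : realType) (T : nat) (C : set 'rV[R]_T).
Hypotheses (C0 : C !=set0) (cC : compact C).

Lemma measurable_exists_nonpos (G : X -> 'rV[R]_T -> R) : caratheodory G ->
  measurable [set x | exists c, C c /\ G x c <= 0].
Proof.
move=> [cG mG]; have [D [DC Ddense]] := dense_rat_family C0.
(* [`<=`] by continuity of G x at a witness, [`>=`] via a minimizer on C. *)
rewrite (_ : [set x | _] =
    \bigcap_j \bigcup_p [set x | G x (D p) < j.+1%:R^-1]).
  apply: bigcapT_measurable => j.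
  apply: countable_bigcupT_measurable => [|p]; first exact: countableP.
  exact: measurable_set_ltr.
apply/seteqP; split => x /=.
  move=> [c [Cc Gc]] j _; have j0 : 0 < j.+1%:R^-1 :> R by rewrite invr_gt0.
  have [e e0 Ge] := (nbhs_ballP _ _).1 (cvg_ball (cG x c) j0).
  have [p cp] := Ddense _ Cc _ e0; exists p => //=.
  move: (Ge _ cp); rewrite /ball /= ltr_norml ltrNl opprB ltrBlDr => /andP[+ _].
  by move/lt_le_trans; apply; rewrite gerDl.
move=> small; have cGx : {within C, continuous (G x)}.
  exact: continuous_subspaceT.
have [c Cc cmin] := EVT_min_rV C0 cC cGx.
exists c; rewrite inE in Cc; split => //; rewrite leNgt; apply/negP => Gc0.
have [j jG] := ltr_add_invr Gc0; rewrite add0r in jG.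
have [p _ /= Gp] := small j I.
by have := cmin (D p) (mem_set (DC p)); rewrite leNgt (lt_trans Gp jG).
Qed.

Lemma measurable_constrained_min (F G : X -> 'rV[R]_T -> R) :
  caratheodory F -> caratheodory G -> (forall x, exists c, C c /\ G x c <= 0) ->
  exists m : X -> R, measurable_fun setT m /\ forall x,
    (exists c, [/\ C c, G x c <= 0 & F x c = m x]) /\
    (forall c, C c -> G x c <= 0 -> m x <= F x c).
Proof.
move=> hF hG feasible.
have argmin x : {c | (C c /\ G x c <= 0) /\
    forall c', C c' -> G x c' <= 0 -> F x c <= F x c'}.
  apply: cid; have [cF _] := hF; have [cG _] := hG.
  have cZ : compact (C `&` [set c | G x c <= 0]).
    apply: compact_closedI => //.
    exact: (proj1 (continuous_closedP (G x)) (cG x) _ (@closed_le R 0)).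
  have cFx : {within C `&` [set c | G x c <= 0], continuous (F x)}.
    exact: continuous_subspaceT.
  have [c Zc cmin] := EVT_min_rV (feasible x) cZ cFx.
  exists c; rewrite inE in Zc; split => // c' Cc' Gc'.
  by apply: cmin; rewrite inE.
pose m x := F x (sval (argmin x)).
exists m; split => [|x]; last first.
  rewrite /m; case: (svalP (argmin x)) => [[Cc Gc] cmin].
  by split; [exists (sval (argmin x)) | exact: cmin].
apply: measurable_fun_ler_sets => r.
rewrite (_ : [set x | m x <= r] =
    [set x | exists c, C c /\ Num.max (F x c - r) (G x c) <= 0]).
  apply: measurable_exists_nonpos; apply: caratheodory_max => //.
  apply: caratheodoryB hF _; apply: caratheodory_continuous.
  exact: cst_continuous.
apply/seteqP; split => x /=; rewrite /m.
all: case: (svalP (argmin x)) => [[Cc Gc] cmin].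
  by move=> Fr; exists (sval (argmin x)); rewrite ge_max subr_le0 Fr Gc.
move=> [c [Cc']]; rewrite ge_max subr_le0 => /andP[Fc Gc'].
exact: le_trans (cmin c Cc' Gc') Fc.
Qed.

Section LexicographicSelection.
Variable G : X -> 'rV[R]_T -> R.
Hypotheses (hG : caratheodory G)
  (G_feasible : forall x, exists c, C c /\ G x c <= 0).

Lemma lexicographic_stage k : (k <= T)%N ->
  exists (s : nat -> X -> R) (Gk : X -> 'rV[R]_T -> R),
  [/\ caratheodory Gk, forall i, measurable_fun setT (s i),
      forall x, exists c, C c /\ Gk x c <= 0 &
      forall x c, C c -> Gk x c <= 0 ->
        G x c <= 0 /\ forall i : 'I_T, (i < k)%N -> c ord0 i = s i x].
Proof.
elim: k => [_|k IH kT].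
  by exists (fun _ _ => 0), G; split => // x c _ Gc; split.
have [s [Gk [hGk ms Gk_feasible Gk_sel]]] := IH (ltnW kT).
pose ik := Ordinal kT.
have hcoord : caratheodory (fun (_ : X) (c : 'rV[R]_T) => c ord0 ik).
  by apply: caratheodory_continuous; exact: coord_continuous.
have [sk [msk sk_min]] := measurable_constrained_min hcoord hGk Gk_feasible.
pose s' i := if i == k then sk else s i.
(* Bounding c_k by its least feasible value sk x pins it to sk x. *)
exists s', (fun x c => Num.max (Gk x c) (c ord0 ik - sk x)); split.
- apply: caratheodory_max => //; apply: caratheodoryB hcoord _.
  exact: caratheodory_measurable.
- by move=> i; rewrite /s'; case: eqP.
- move=> x; have [[c [Cc Gc ck]] _] := sk_min x.
  by exists c; rewrite ge_max Gc ck subrr lexx.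
move=> x c Cc; rewrite ge_max subr_le0 => /andP[Gc ck].
have [G0 cs] := Gk_sel x c Cc Gc; split => // i.
rewrite ltnS leq_eqVlt => /orP[/eqP ik_eq|ilt].
  have -> : i = ik by apply: val_inj.
  rewrite /s' /= eqxx; apply/le_anti/andP; split => //.
  exact: (sk_min x).2 c Cc Gc.
by rewrite /s' (ltn_eqF ilt) cs.
Qed.

Lemma measurable_feasible_selection : exists f : X -> 'rV[R]_T,
  (forall i, measurable_fun setT (fun x => f x ord0 i)) /\
  forall x, C (f x) /\ G x (f x) <= 0.
Proof.
have [s [GT [_ ms GT_feasible GT_sel]]] := lexicographic_stage (leqnn T).
exists (fun x => \row_i s i x); split => [i|x].
  by under eq_fun do rewrite mxE; exact: ms.
have [c [Cc GTc]] := GT_feasible x; have [Gc cs] := GT_sel x c Cc GTc.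
suff <- : c = \row_i s i x by [].
by apply/rowP => i; rewrite mxE; exact: cs (ltn_ord i).
Qed.

End LexicographicSelection.

Lemma measurable_argmin (F : X -> 'rV[R]_T -> R) : caratheodory F ->
  exists (f : X -> 'rV[R]_T) (m : X -> R),
  [/\ forall i, measurable_fun setT (fun x => f x ord0 i),
      measurable_fun setT m &
      forall x, [/\ C (f x), F x (f x) = m x & forall c, C c -> m x <= F x c]].
Proof.
move=> hF; have [c0 Cc0] := C0.
have hzero : caratheodory (fun (_ : X) (_ : 'rV[R]_T) => 0 : R).
  by apply: caratheodory_continuous; exact: cst_continuous.
have [m [mm m_min]] :=
  measurable_constrained_min hF hzero (fun=> ex_intro _ c0 (conj Cc0 (lexx 0))).
have hFm := caratheodoryB hF (caratheodory_measurable _ mm).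
have Fm_feasible x : exists c, C c /\ F x c - m x <= 0.
  by have [[c [Cc _ Fc]] _] := m_min x; exists c; rewrite Fc subrr.
have [f [mf f_sel]] := measurable_feasible_selection hFm Fm_feasible.
exists f, m; split => // x; have [Cf Ff] := f_sel x; rewrite subr_le0 in Ff.
have m_le c : C c -> m x <= F x c by move=> Cc; exact: (m_min x).2 c Cc (lexx 0).
by split => //; apply/le_anti; rewrite Ff m_le.
Qed.

End MeasurableSelection.

Lemma caratheodory_rfun d (X : measurableType d) (R : realType) (T : nat)
  (H : completeNormedModType R) (ip : H -> H -> R) (psi : R -> H)
  (V : {linear H -> H}) (g : 'I_T -> X -> H) :
  inner_product_of ip -> continuous psi -> continuous V ->
  (forall t, borel_measurable (g t)) -> caratheodory (rfun ip psi V g).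
Proof.
move=> ipH cpsi cV mg; split => [x c|c]; rewrite /rfun.
  have cs : continuous (fun c : 'rV[R]_T =>
      \sum_(t < T) ip (psi (c ord0 t)) (V (g t x))).
    apply: continuous_sum => t c'.
    apply: (@continuous_comp _ _ _ (fun c : 'rV[R]_T => c ord0 t)
              ((ip ^~ (V (g t x))) \o psi)); first exact: coord_continuous.
    by apply: continuous_comp; [exact: cpsi | exact: continuous_ipl].
  by have := continuousM (@cst_continuous _ _ (T%:R^-1 : R) c) (cs c).
apply: measurable_funM => //; apply: measurable_sum => t.
pose phi h := ip (psi (c ord0 t)) (V h).
apply: (measurable_fun_continuous_comp (phi := phi)) => // h.
apply: (@continuous_comp _ _ _ V (ip (psi (c ord0 t)))); first exact: cV.
exact: continuous_ipr.
Qed.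

Theorem lemma3 (R : realType) (X : ptopologicalType)
  (rho : probability (borel_type X) R)
  (a b : R) (T : nat) (C : set 'rV[R]_T)
  (H : completeNormedModType R) (ip : H -> H -> R) (ev : H -> R -> R)
  (psi : R -> H) (V : {linear H -> H}) (l : R -> R -> R)
  (g : 'I_T -> borel_type X -> H) :
  @polish R X ->
  a < b -> (1 <= T)%N ->
  C !=set0 -> compact C ->
  C `<=` [set c | forall t : 'I_T, c ord0 t \in `[a, b]] ->
  SELF `[a, b] l ip ev psi V ->
  {within [set p : R * R | p.1 \in `[a, b] /\ p.2 \in `[a, b]],
     continuous (fun p : R * R => l p.1 p.2)} ->
  (forall t, borel_measurable (g t)) ->
  (forall t, exists M : R, {ae rho, forall x, `|g t x| <= M}) ->
  exists (fo : borel_type X -> 'rV[R]_T) (m : borel_type X -> R),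
    [/\ borel_measurable fo /\
        (forall x, C (fo x) /\
           forall c, C c -> rfun ip psi V g x (fo x) <= rfun ip psi V g x c),
        measurable_fun setT m,
        {ae rho, forall x, (exists c, C c /\ m x = rfun ip psi V g x c) /\
                           forall c, C c -> m x <= rfun ip psi V g x c},
        Ebar rho ip psi V g fo = (\int[rho]_x (m x)%:E)%E &
        (\int[rho]_x (m x)%:E)%E =
          ereal_inf [set Ebar rho ip psi V g f | f in
            [set f : borel_type X -> 'rV[R]_T |
               (forall x, C (f x)) /\ borel_measurable f]]].
Proof.
move=> _ ab _ C0 cC Cab [[ipH _ _ _] cpsi cV _] _ mg _.
(* psi is continuous only on [a, b]; clamping changes nothing on C. *)
pose psi' := psi \o clamp a b.
have cpsi' : continuous psi'.
  apply: continuous_comp_within cpsi (@continuous_clamp R a b) _ => y.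
  exact: clamp_itv (ltW ab).
have r_clamp x c : C c -> rfun ip psi V g x c = rfun ip psi' V g x c.
  move=> Cc; rewrite /rfun /psi'; congr (_ * _); apply: eq_bigr => t _ /=.
  by rewrite clamp_id //; exact: Cab.
have [fo [m [mfo mm fo_min]]] :=
  measurable_argmin C0 cC (caratheodory_rfun ipH cpsi' cV mg).
have bfo : borel_measurable fo.
  by apply: borel_measurable_mx => i j; rewrite (ord1 i).
have Efo : Ebar rho ip psi V g fo = (\int[rho]_x (m x)%:E)%E.
  by apply: eq_integral => x _; have [Cf <- _] := fo_min x; rewrite r_clamp.
exists fo, m; split => //.
- split => // x; have [Cf Ff fmin] := fo_min x; split => // c Cc.
  by rewrite !r_clamp // Ff; exact: fmin.
- apply: aeW => x; have [Cf Ff fmin] := fo_min x; split.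
    by exists (fo x); rewrite r_clamp // Ff.
  by move=> c Cc; rewrite r_clamp //; exact: fmin.
apply/le_anti/andP; split.
  apply/ereal_infP => _ [f [Cf _] <-]; apply: le_integral_pointwise => x.
  by have [_ _ fmin] := fo_min x; rewrite lee_fin r_clamp //; exact: fmin.
rewrite -Efo; apply: ereal_inf_lbound; exists fo => //; split => // x.
by have [] := fo_min x.
Qed.
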